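(* With $L_\infty$, $L_\infty^\pm$ and $d(n)$ as in the context, $$L_\infty=\tfrac1{n+1}L^+_\infty+O(\eta^{n+1})\ \text{ as }\eta=1-s\to0^+,\qquad L_\infty=\tfrac1{d(n)}L^-_\infty+O(s^{\frac{n+1}{n}})\ \text{ as }s\to0^+,$$ in the following sense: the zeroth-order coefficients agree, and each coefficient of $\partial^2$ and of $\partial$ of $L_\infty$ equals the corresponding coefficient of the model operator (written in the same variable) times $1+O(\epsilon)$, with $\epsilon=\eta^{n+1}$ resp. $\epsilon=s^{(n+1)/n}$.
   Context: Fix $n\ge2$ and let $c(n):=\int_0^\infty(e^\xi-1)^{-1/(n+1)}d\xi$, $d(n):=\big(\frac{n}{n+1}\big)^{1/n}c(n)^{\frac{n+1}{n}}$. Define $\Phi_\infty:(0,1)\to(0,\infty)$ by $\int_0^{\Phi_\infty(s)}(e^\xi-1)^{-1/(n+1)}d\xi=c(n)\,s$ (then $\Phi_\infty',\Phi_\infty''>0$), and define the ordinary differential operator on $(0,1)$ $$L_\infty u:=\frac{u''}{\Phi_\infty''}+(n-1)\frac{u'}{\Phi_\infty'}-u,$$ (primes are $d/ds$; this is the collapsed limit of $\Delta-\mathrm{Id}$ on radial functions on the neck). Write $\eta:=1-s$. Model operators: $L^+_\infty:=\eta^2\partial^2_{\eta\eta}-(n-1)\eta\partial_\eta-(n+1)\mathrm{Id}$ and $L^-_\infty:=n s^{\frac{n-1}{n}}\partial^2_{ss}+(n-1)s^{-\frac1n}\partial_s-d(n)\mathrm{Id}$. *)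

From Stdlib Require Import Reals.
From Coquelicot Require Import Coquelicot.
Open Scope R_scope.

Definition integrand (n : nat) (xi : R) : R :=
  Rpower (exp xi - 1) (- (1 / (INR n + 1))).

Definition c_n (n : nat) : R :=
  RInt_gen (integrand n) (at_right 0) (Rbar_locally p_infty).

Definition d_n (n : nat) : R :=
  Rpower (INR n / (INR n + 1)) (1 / INR n) * Rpower (c_n n) ((INR n + 1) / INR n).

Definition is_Phi_infty (n : nat) (Phi : R -> R) : Prop :=
  forall s, 0 < s < 1 ->
    0 < Phi s /\
    is_RInt_gen (integrand n) (at_right 0) (at_point (Phi s)) (c_n n * s).

(* Coefficients of L_infty u = u''/Phi'' + (n-1) u'/Phi' - u  in the variable s *)
Definition Linf_c2 (Phi : R -> R) (s : R) : R := / Derive_n Phi 2 s.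
Definition Linf_c1 (n : nat) (Phi : R -> R) (s : R) : R := (INR n - 1) / Derive Phi s.
Definition Linf_c0 : R := -1.

(* Same operator rewritten in eta = 1 - s:  d/ds = - d/deta, d^2/ds^2 = d^2/deta^2 *)
Definition Linf_eta_c2 (Phi : R -> R) (eta : R) : R := Linf_c2 Phi (1 - eta).
Definition Linf_eta_c1 (n : nat) (Phi : R -> R) (eta : R) : R := - Linf_c1 n Phi (1 - eta).

(* Coefficients of (1/(n+1)) L^+ = (1/(n+1)) (eta^2 d^2 - (n-1) eta d - (n+1) Id), in eta *)
Definition Lplus_c2 (n : nat) (eta : R) : R := eta ^ 2 / (INR n + 1).
Definition Lplus_c1 (n : nat) (eta : R) : R := - ((INR n - 1) * eta) / (INR n + 1).
Definition Lplus_c0 (n : nat) : R := - (INR n + 1) / (INR n + 1).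

(* Coefficients of (1/d) L^- = (1/d)(n s^((n-1)/n) d^2 + (n-1) s^(-1/n) d - d Id), in s *)
Definition Lminus_c2 (n : nat) (s : R) : R :=
  INR n * Rpower s ((INR n - 1) / INR n) / d_n n.
Definition Lminus_c1 (n : nat) (s : R) : R :=
  (INR n - 1) * Rpower s (- (1 / INR n)) / d_n n.
Definition Lminus_c0 (n : nat) : R := - d_n n / d_n n.

(* a = b (1 + O(eps)) as x -> 0^+ : |a x - b x| <= C eps(x) |b x| for 0 < x < delta *)
Definition rel_err_O (a b eps : R -> R) : Prop :=
  exists C delta, 0 < delta /\
    forall x, 0 < x < delta -> Rabs (a x - b x) <= C * eps x * Rabs (b x).

(* Let a = 1/(n+1) and J(y) = int_0^y (e^x - 1)^(-a) dx, so that J(Phi s) = c s.  Then Phi is the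
   inverse of J/c, hence Phi' = c (e^y - 1)^a and Phi'' = a c^2 e^y (e^y - 1)^(2a-1) at y = Phi s,
   and the coefficients of L_infty are explicit functions of y.  As s -> 0, y -> 0 and
   c s = J(y) = y^(1-a)/(1-a) (1 + O(y)); as s -> 1, y -> oo and
   c (1 - s) = int_y^oo = e^(-a y)/a (1 + O(e^(-y))).  In both regimes the logarithm of each
   coefficient differs from that of its model by O(y) = O(s^((n+1)/n)), resp.
   O(e^(-y)) = O((1-s)^(n+1)), which is the claimed relative error. *)

From Stdlib Require Import Reals Ranalysis5 Classical_Prop Lra Psatz.
From Coquelicot Require Import Coquelicot.
Open Scope R_scope.

(** * Elementary estimates *)

Lemma exp_le_exp x y : x <= y -> exp x <= exp y.
Proof.
  intros Hxy. destruct (Req_dec x y) as [->|Hne]; [lra|].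
  left. apply exp_increasing. lra.
Qed.

Lemma ln_le_sub1 x : 0 < x -> ln x <= x - 1.
Proof. intros Hx. pose proof (exp_ineq1_le (ln x)) as He. rewrite exp_ln in He; lra. Qed.

Lemma Rabs_ln_le x : / 2 <= x -> Rabs (ln x) <= 2 * Rabs (x - 1).
Proof.
  intros Hx. destruct (Rle_lt_dec 1 x).
  - assert (0 <= ln x) by (rewrite <- ln_1; apply ln_le; lra).
    pose proof (ln_le_sub1 x ltac:(lra)).
    rewrite !Rabs_pos_eq; lra.
  - assert (ln x <= 0) by (rewrite <- ln_1; apply ln_le; lra).
    assert (Hinv : 1 - / x <= ln x).
    { pose proof (ln_le_sub1 (/ x) ltac:(apply Rinv_0_lt_compat; lra)) as Hl.
      rewrite ln_Rinv in Hl; lra. }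
    assert (/ x * x = 1) by (field; lra).
    assert (0 < / x) by (apply Rinv_0_lt_compat; lra).
    rewrite !Rabs_left1 by lra. nra.
Qed.

Lemma exp_sub1_le x : 0 <= x -> exp x - 1 <= x * exp x.
Proof.
  intros Hx. pose proof (exp_ineq1_le (- x)). rewrite exp_Ropp in H.
  pose proof (exp_pos x). assert (/ exp x * exp x = 1) by (field; lra). nra.
Qed.

Lemma Rabs_exp_sub1_le t : t <= 1 -> Rabs (exp t - 1) <= 3 * Rabs t.
Proof.
  intros Ht. pose proof (exp_ineq1_le t). destruct (Rle_lt_dec 0 t).
  - assert (exp t <= 3) by (pose proof exp_le_3; pose proof (exp_le_exp t 1 Ht); lra).
    pose proof (exp_sub1_le t r).
    rewrite !Rabs_pos_eq; nra.
  - assert (exp t < 1) by (rewrite <- exp_0; apply exp_increasing; lra).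
    rewrite !Rabs_left1; lra.
Qed.

Lemma ln_expm1_bounds y : 0 < y -> ln y <= ln (exp y - 1) <= ln y + y.
Proof.
  intros Hy. pose proof (exp_ineq1 y ltac:(lra)). split.
  - apply ln_le; lra.
  - replace (ln y + y) with (ln (y * exp y)) by (rewrite ln_mult, ln_exp; auto; apply exp_pos).
    apply ln_le; [lra|]. apply exp_sub1_le. lra.
Qed.

Lemma exp_neg_le_inv y : 0 <= y -> exp (- y) <= / (1 + y).
Proof.
  intros Hy. rewrite exp_Ropp. apply Rinv_le_contravar; [lra|]. apply exp_ineq1_le.
Qed.

Lemma Rabs_ln_expm1_sub y : 1 <= y -> Rabs (ln (exp y - 1) - y) <= 2 * exp (- y).
Proof.
  intros Hy. pose proof (exp_neg_le_inv y ltac:(lra)) as Ht. pose proof (exp_pos (- y)).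
  assert (/ (1 + y) <= / 2) by (apply Rinv_le_contravar; lra).
  replace (exp y - 1) with (exp y * (1 - exp (- y)))
    by (rewrite exp_Ropp; field; apply Rgt_not_eq, exp_pos).
  rewrite ln_mult by (try apply exp_pos; lra). rewrite ln_exp.
  replace (y + ln (1 - exp (- y)) - y) with (ln (1 - exp (- y))) by ring.
  pose proof (Rabs_ln_le (1 - exp (- y)) ltac:(lra)) as Hln.
  replace (1 - exp (- y) - 1) with (- exp (- y)) in Hln by ring.
  rewrite Rabs_Ropp, (Rabs_pos_eq (exp (- y))) in Hln by lra. exact Hln.
Qed.

Lemma rel_err_O_of_ln_bound (X Y eps b : R -> R) (K delta : R) :
  0 < delta ->
  (forall x, 0 < x < delta ->
     0 < X x /\ 0 < Y x /\ Rabs (ln (X x) - ln (Y x)) <= b x <= 1 /\ b x <= K * eps x) ->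
  rel_err_O X Y eps.
Proof.
  intros Hdelta Hb. exists (3 * K), delta. split; [exact Hdelta|].
  intros x Hx. destruct (Hb x Hx) as (HX & HY & [HD Hb1] & HbK).
  set (D := ln (X x) - ln (Y x)) in *.
  assert (HXY : X x = Y x * exp D).
  { unfold D, Rminus. rewrite exp_plus, exp_Ropp, !exp_ln by lra. field. lra. }
  rewrite HXY, (Rabs_pos_eq (Y x)) by lra.
  replace (Y x * exp D - Y x) with (Y x * (exp D - 1)) by ring.
  rewrite Rabs_mult, Rabs_pos_eq by lra.
  pose proof (Rabs_exp_sub1_le D ltac:(pose proof (Rle_abs D); lra)).
  assert (Rabs (exp D - 1) <= 3 * K * eps x) by lra.
  rewrite Rmult_comm. apply Rmult_le_compat_r; lra.
Qed.

Lemma rel_err_O_opp (X Y eps : R -> R) :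
  rel_err_O (fun x => - X x) (fun x => - Y x) eps -> rel_err_O X Y eps.
Proof.
  intros (C & delta & Hdelta & HC). exists C, delta. split; [exact Hdelta|].
  intros x Hx. specialize (HC x Hx).
  rewrite Rabs_Ropp in HC. replace (X x - Y x) with (- (- X x - - Y x)) by ring.
  rewrite Rabs_Ropp. exact HC.
Qed.

(** * Filters and improper integrals *)

Lemma locally_pos x : 0 < x -> locally x (fun y => 0 < y).
Proof.
  intros Hx. exists (mkposreal x Hx). intros y Hy.
  change (Rabs (y - x) < x) in Hy. apply Rabs_lt_between in Hy. lra.
Qed.

Lemma locally_unit_interval s : 0 < s < 1 -> locally s (fun t => 0 < t < 1).
Proof.
  intros Hs. assert (Hm : 0 < Rmin s (1 - s)) by (apply Rmin_pos; lra).
  exists (mkposreal _ Hm). intros t Ht. change (Rabs (t - s) < Rmin s (1 - s)) in Ht.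
  apply Rabs_lt_between in Ht. pose proof (Rmin_l s (1 - s)). pose proof (Rmin_r s (1 - s)). lra.
Qed.

Lemma at_right_0_lt x : 0 < x -> at_right 0 (fun y => 0 < y < x).
Proof.
  intros Hx. exists (mkposreal x Hx). intros y Hy Hy0.
  change (Rabs (y - 0) < x) in Hy. rewrite Rminus_0_r, Rabs_pos_eq in Hy; lra.
Qed.

Lemma filterlim_at_point (F : R -> R) y : filterlim F (at_point y) (locally (F y)).
Proof. intros P HP. unfold filtermap, at_point. apply locally_singleton, HP. Qed.

Lemma filterlim_scal_0 {T : Type} {F : (T -> Prop) -> Prop} (k : R) (f : T -> R) :
  filterlim f F (locally 0) -> filterlim (fun t => k * f t) F (locally 0).
Proof.
  intros Hf. eapply filterlim_comp; [exact Hf|].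
  pose proof (@filterlim_scal_r R_AbsRing R_NormedModule k 0) as Hs.
  change (filterlim (fun z => k * z) (locally 0) (locally (k * 0))) in Hs.
  rewrite Rmult_0_r in Hs. exact Hs.
Qed.

Lemma filterlim_nondecreasing_bounded (F : R -> R) (x0 M : R) :
  (forall x y, x0 <= x <= y -> F x <= F y) -> (forall x, x0 <= x -> F x <= M) ->
  exists l, filterlim F (Rbar_locally p_infty) (locally l).
Proof.
  intros Hmono Hbnd.
  set (E := fun z => exists x, x0 <= x /\ z = F x).
  destruct (completeness E) as [l [Hub Hlub]].
  { exists M. intros z [x [Hx ->]]. apply Hbnd, Hx. }
  { exists (F x0), x0. split; [lra | reflexivity]. }
  exists l. apply filterlim_locally. intros eps. pose proof (cond_pos eps).
  assert (Hnear : exists x1, x0 <= x1 /\ l - eps < F x1).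
  { apply NNPP. intros Hno.
    assert (l <= l - eps) by (apply Hlub; intros z [x [Hx ->]];
      apply Rnot_lt_le; intros Hlt; apply Hno; exists x; split; assumption).
    lra. }
  destruct Hnear as [x1 [Hx1 Hlt]]. exists x1. intros t Ht.
  assert (F t <= l) by (apply Hub; exists t; split; [lra | reflexivity]).
  assert (F x1 <= F t) by (apply Hmono; lra).
  change (Rabs (F t - l) < eps). rewrite Rabs_left1; lra.
Qed.

Lemma Rpower_lim_0 p : 0 < p -> filterlim (fun t => Rpower t p) (at_right 0) (locally 0).
Proof.
  intros Hp. apply filterlim_locally. intros eps. pose proof (cond_pos eps).
  exists (mkposreal _ (exp_pos (ln eps / p))). intros t Ht Ht0.
  change (Rabs (t - 0) < exp (ln eps / p)) in Ht. rewrite Rminus_0_r, Rabs_pos_eq in Ht by lra.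
  change (Rabs (Rpower t p - 0) < eps). rewrite Rminus_0_r, Rabs_pos_eq by (left; apply exp_pos).
  apply ln_increasing in Ht; [|exact Ht0]. rewrite ln_exp in Ht.
  rewrite <- (exp_ln eps) by lra. apply exp_increasing.
  apply (Rmult_lt_compat_l p) in Ht; [|exact Hp].
  replace (p * (ln eps / p)) with (ln eps) in Ht by (field; lra). lra.
Qed.

Lemma exp_lim_infty p : 0 < p -> filterlim (fun t => exp (- p * t)) (Rbar_locally p_infty) (locally 0).
Proof.
  intros Hp. apply filterlim_locally. intros eps. pose proof (cond_pos eps).
  exists (- ln eps / p). intros t Ht.
  change (Rabs (exp (- p * t) - 0) < eps). rewrite Rminus_0_r, Rabs_pos_eq by (left; apply exp_pos).
  rewrite <- (exp_ln eps) by lra. apply exp_increasing.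
  apply (Rmult_lt_compat_l p) in Ht; [|exact Hp].
  replace (p * (- ln eps / p)) with (- ln eps) in Ht by (field; lra). lra.
Qed.

Lemma Rpower_continuous p t : 0 < t -> continuous (fun u => Rpower u p) t.
Proof.
  intros Ht. apply (ex_derive_continuous (fun u => Rpower u p)).
  exists (p * Rpower t (p - 1)). apply is_derive_Reals, derivable_pt_lim_power, Ht.
Qed.

Lemma is_derive_Rpower_primitive p t : p <> 0 -> 0 < t ->
  is_derive (fun u => / p * Rpower u p) t (Rpower t (p - 1)).
Proof.
  intros Hp Ht. pose proof (proj2 (is_derive_Reals _ _ _) (derivable_pt_lim_power t p Ht)) as HD.
  apply (is_derive_scal _ _ (/ p)) in HD.
  replace (Rpower t (p - 1)) with (/ p * (p * Rpower t (p - 1))); [exact HD|].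
  field. exact Hp.
Qed.

Lemma is_derive_exp_primitive p t : p <> 0 ->
  is_derive (fun u => - / p * exp (- p * u)) t (exp (- p * t)).
Proof. intros Hp. auto_derive; [exact I|]. field. exact Hp. Qed.

Lemma is_RInt_gen_primitive {Fa Fb : (R -> Prop) -> Prop} {FFa : Filter Fa} {FFb : Filter Fb}
  (F g : R -> R) (la lb : R) :
  Fa (fun x => 0 < x) -> Fb (fun x => 0 < x) ->
  (forall x, 0 < x -> is_derive F x (g x)) -> (forall x, 0 < x -> continuous g x) ->
  filterlim F Fa (locally la) -> filterlim F Fb (locally lb) ->
  is_RInt_gen g Fa Fb (lb - la).
Proof.
  intros HFa HFb Hder Hcont Hla Hlb.
  assert (Hpos : forall P : R -> Prop, (forall x, 0 < x -> P x) ->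
    filter_prod Fa Fb (fun ab => forall x, Rmin (fst ab) (snd ab) <= x <= Rmax (fst ab) (snd ab) -> P x)).
  { intros P HP. exists (fun x => 0 < x) (fun x => 0 < x); auto.
    intros u v Hu Hv x Hx. apply HP. pose proof (Rmin_glb_lt u v 0 Hu Hv). simpl in Hx. lra. }
  apply is_RInt_gen_ext with (f := Derive F).
  { apply (filter_imp _ _ (fun ab Hab x Hx => Hab x (conj (Rlt_le _ _ (proj1 Hx)) (Rlt_le _ _ (proj2 Hx))))).
    apply Hpos. intros x Hx. apply is_derive_unique, Hder, Hx. }
  apply is_RInt_gen_Derive; auto.
  - apply Hpos. intros x Hx. eexists. apply Hder, Hx.
  - apply Hpos. intros x Hx. apply continuous_ext_loc with g; [|apply Hcont, Hx].
    apply (filter_imp _ _ (fun y Hy => eq_sym (is_derive_unique _ _ _ (Hder y Hy)))).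
    apply locally_pos, Hx.
Qed.

Lemma is_RInt_gen_Rabs_sub_le {Fa Fb : (R -> Prop) -> Prop}
  {FFa : ProperFilter Fa} {FFb : ProperFilter Fb} (f g r : R -> R) (lf lg lr : R) :
  filter_prod Fa Fb (fun ab => fst ab <= snd ab) ->
  filter_prod Fa Fb (fun ab => forall x, fst ab <= x <= snd ab -> Rabs (f x - g x) <= r x) ->
  is_RInt_gen f Fa Fb lf -> is_RInt_gen g Fa Fb lg -> is_RInt_gen r Fa Fb lr ->
  Rabs (lf - lg) <= lr.
Proof.
  intros Hle Hfg Hf Hg Hr.
  exact (RInt_gen_norm (fun x => minus (f x) (g x)) r _ lr Hle Hfg (is_RInt_gen_minus f g lf lg Hf Hg) Hr).
Qed.

Lemma is_RInt_gen_nonneg {Fa Fb : (R -> Prop) -> Prop}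
  {FFa : ProperFilter Fa} {FFb : ProperFilter Fb} (f : R -> R) (l : R) :
  filter_prod Fa Fb (fun ab => fst ab <= snd ab) ->
  filter_prod Fa Fb (fun ab => forall x, fst ab <= x <= snd ab -> 0 <= f x) ->
  is_RInt_gen f Fa Fb l -> 0 <= l.
Proof.
  intros Hle Hf Hl.
  assert (Rabs l <= l); [|pose proof (Rle_abs (- l)); rewrite Rabs_Ropp in *; lra].
  apply (RInt_gen_norm f f l l Hle); [|exact Hl | exact Hl].
  apply (filter_imp _ _ (fun ab Hab x Hx => Req_le _ _ (Rabs_pos_eq _ (Hab x Hx)))), Hf.
Qed.

Lemma RInt_gen_eq {Fa Fb : (R -> Prop) -> Prop} {FFa : ProperFilter Fa} {FFb : ProperFilter Fb}
  (f : R -> R) (l : R) : is_RInt_gen f Fa Fb l -> RInt_gen f Fa Fb = l.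
Proof.
  exact (@is_RInt_gen_unique R_CompleteNormedModule Fa Fb
    (Proper_StrongProper _ FFa) (Proper_StrongProper _ FFb) f l).
Qed.

(** * The kernel (e^x - 1)^(-a) *)

Definition kernel (a x : R) : R := Rpower (exp x - 1) (- a).

Lemma kernel_pos a x : 0 < kernel a x.
Proof. apply exp_pos. Qed.

Lemma kernel_continuous a x : 0 < x -> continuous (kernel a) x.
Proof.
  intros Hx. pose proof (exp_ineq1 x ltac:(lra)).
  apply (ex_derive_continuous (kernel a)). unfold kernel, Rpower. auto_derive. lra.
Qed.

Lemma kernel_decreasing a x y : 0 <= a -> 0 < x -> x <= y -> kernel a y <= kernel a x.
Proof.
  intros Ha Hx Hxy. pose proof (exp_ineq1 x ltac:(lra)).
  assert (ln (exp x - 1) <= ln (exp y - 1)) by (apply ln_le; [lra|]; pose proof (exp_le_exp x y Hxy); lra).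
  apply exp_le_exp. nra.
Qed.

Lemma ex_RInt_kernel a x y : 0 < x -> 0 < y -> ex_RInt (kernel a) x y.
Proof.
  intros Hx Hy. apply (@ex_RInt_continuous R_CompleteNormedModule). intros z Hz.
  apply kernel_continuous. pose proof (Rmin_glb_lt x y 0 Hx Hy). lra.
Qed.

Lemma kernel_near_0 a x : 0 <= a -> 0 < x ->
  Rabs (kernel a x - Rpower x (- a)) <= 3 * a * Rpower x (1 - a).
Proof.
  intros Ha Hx. pose proof (ln_expm1_bounds x Hx) as [Hlo Hhi].
  set (D := - a * (ln (exp x - 1) - ln x)).
  assert (Hk : kernel a x = Rpower x (- a) * exp D).
  { unfold kernel, Rpower, D. rewrite <- exp_plus. f_equal. ring. }
  assert (Hp : Rpower x (1 - a) = x * Rpower x (- a)).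
  { replace (1 - a) with (1 + - a) by ring. rewrite Rpower_plus, Rpower_1; auto. }
  rewrite Hk, Hp. replace (Rpower x (- a) * exp D - Rpower x (- a)) with (Rpower x (- a) * (exp D - 1)) by ring.
  pose proof (exp_pos (- a * ln x)) as Hpos. fold (Rpower x (- a)) in Hpos.
  rewrite Rabs_mult, Rabs_pos_eq by lra.
  pose proof (Rabs_exp_sub1_le D ltac:(unfold D; nra)).
  assert (Rabs D <= a * x) by (unfold D; rewrite Rabs_left1 by nra; nra).
  nra.
Qed.

Lemma kernel_near_infty a x : 0 <= a <= 1 -> 1 <= x ->
  Rabs (kernel a x - exp (- a * x)) <= 6 * exp (- (1 + a) * x).
Proof.
  intros Ha Hx. pose proof (Rabs_ln_expm1_sub x Hx) as HL.
  pose proof (exp_neg_le_inv x ltac:(lra)) as Ht.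
  assert (/ (1 + x) <= / 2) by (apply Rinv_le_contravar; lra).
  set (D := - a * (ln (exp x - 1) - x)).
  assert (Hk : kernel a x = exp (- a * x) * exp D).
  { unfold kernel, Rpower, D. rewrite <- exp_plus. f_equal. ring. }
  assert (He : exp (- (1 + a) * x) = exp (- a * x) * exp (- x)).
  { rewrite <- exp_plus. f_equal. ring. }
  assert (HD : Rabs D <= 2 * exp (- x)).
  { unfold D. rewrite Rabs_mult, Rabs_Ropp, (Rabs_pos_eq a) by lra.
    pose proof (Rabs_pos (ln (exp x - 1) - x)). nra. }
  rewrite Hk, He. replace (exp (- a * x) * exp D - exp (- a * x)) with (exp (- a * x) * (exp D - 1)) by ring.
  pose proof (exp_pos (- a * x)).
  rewrite Rabs_mult, Rabs_pos_eq by lra.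
  pose proof (Rabs_exp_sub1_le D ltac:(pose proof (Rle_abs D); lra)).
  nra.
Qed.

Lemma kernel_integral_near_0 a x l : 0 < a < 1 -> 0 < x ->
  is_RInt_gen (kernel a) (at_right 0) (at_point x) l ->
  Rabs (l - Rpower x (1 - a) / (1 - a)) <= 3 * a * Rpower x (2 - a) / (2 - a).
Proof.
  intros Ha Hx Hl.
  assert (Hright : at_right 0 (fun t => 0 < t)).
  { apply (filter_imp (fun t => 0 < t < x)); [intros t Ht; apply Ht | apply at_right_0_lt, Hx]. }
  assert (Hprim : forall k p, 0 < p -> k = / p ->
    is_RInt_gen (fun t => Rpower t (p - 1)) (at_right 0) (at_point x) (k * Rpower x p - 0)).
  { intros k p Hp ->. apply (is_RInt_gen_primitive (fun u => / p * Rpower u p)).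
    - exact Hright.
    - exact Hx.
    - intros t Ht. apply is_derive_Rpower_primitive; lra.
    - intros t Ht. apply Rpower_continuous, Ht.
    - apply filterlim_scal_0, Rpower_lim_0, Hp.
    - exact (filterlim_at_point (fun u => / p * Rpower u p) x). }
  apply (is_RInt_gen_Rabs_sub_le (FFa := at_right_proper_filter 0) (FFb := at_point_filter x)
    (kernel a) (fun t => Rpower t (1 - a - 1)) (fun t => 3 * a * Rpower t (2 - a - 1))).
  - exists (fun t => 0 < t < x) (fun t => t = x); [apply at_right_0_lt, Hx | reflexivity |].
    intros u v Hu Hv. simpl. lra.
  - exists (fun t => 0 < t < x) (fun t => t = x); [apply at_right_0_lt, Hx | reflexivity |].
    intros u v Hu Hv t Ht. simpl in Ht.
    replace (1 - a - 1) with (- a) by ring. replace (2 - a - 1) with (1 - a) by ring.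
    apply kernel_near_0; lra.
  - exact Hl.
  - replace (Rpower x (1 - a) / (1 - a)) with (/ (1 - a) * Rpower x (1 - a) - 0) by (field; lra).
    apply Hprim; [lra | reflexivity].
  - replace (3 * a * Rpower x (2 - a) / (2 - a))
      with (3 * a * (/ (2 - a) * Rpower x (2 - a) - 0)) by (field; lra).
    assert (H2a : 0 < 2 - a) by lra.
    exact (is_RInt_gen_scal _ (3 * a) _ (Hprim _ (2 - a) H2a eq_refl)).
Qed.

Lemma kernel_integral_near_infty a x l : 0 < a < 1 -> 1 <= x ->
  is_RInt_gen (kernel a) (at_point x) (Rbar_locally p_infty) l ->
  Rabs (l - exp (- a * x) / a) <= 6 * exp (- (1 + a) * x) / (1 + a).
Proof.
  intros Ha Hx Hl.
  assert (Hinf : Rbar_locally p_infty (fun t => x <= t)) by (exists x; intros; lra).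
  assert (Hprim : forall p, 0 < p ->
    is_RInt_gen (fun t => exp (- p * t)) (at_point x) (Rbar_locally p_infty) (0 - - / p * exp (- p * x))).
  { intros p Hp. apply (is_RInt_gen_primitive (fun u => - / p * exp (- p * u))).
    - change (0 < x). lra.
    - exists 0. auto.
    - intros t _. apply is_derive_exp_primitive. lra.
    - intros t _. apply (ex_derive_continuous (fun u => exp (- p * u))). auto_derive. exact I.
    - exact (filterlim_at_point (fun u => - / p * exp (- p * u)) x).
    - apply filterlim_scal_0, exp_lim_infty, Hp. }
  apply (is_RInt_gen_Rabs_sub_le (FFa := at_point_filter x) (FFb := Rbar_locally_filter p_infty)
    (kernel a) (fun t => exp (- a * t)) (fun t => 6 * exp (- (1 + a) * t))).
  - exists (fun t => t = x) (fun t => x <= t); [reflexivity | exact Hinf |].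
    intros u v Hu Hv. simpl. lra.
  - exists (fun t => t = x) (fun t => x <= t); [reflexivity | exact Hinf |].
    intros u v Hu Hv t Ht. simpl in Ht. apply kernel_near_infty; lra.
  - exact Hl.
  - replace (exp (- a * x) / a) with (0 - - / a * exp (- a * x)) by (field; lra).
    apply Hprim. lra.
  - replace (6 * exp (- (1 + a) * x) / (1 + a))
      with (6 * (0 - - / (1 + a) * exp (- (1 + a) * x))) by (field; lra).
    assert (H1a : 0 < 1 + a) by lra.
    exact (is_RInt_gen_scal _ 6 _ (Hprim (1 + a) H1a)).
Qed.

(** * The profile Phi *)

Section Profile.

Variables (a : R) (Phi : R -> R).
Hypothesis Ha : 0 < a < 1.
Let c := RInt_gen (kernel a) (at_right 0) (Rbar_locally p_infty).
Hypothesis HPhi : forall s, 0 < s < 1 ->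
  0 < Phi s /\ is_RInt_gen (kernel a) (at_right 0) (at_point (Phi s)) (c * s).

(* The hypothesis at s = 1/2 fixes the constant: [J x] is the integral of the kernel over (0, x]
   ([is_RInt_gen_kernel_primitive]). *)
Definition kernel_primitive (x : R) : R := c / 2 + RInt (kernel a) (Phi (1 / 2)) x.
Local Notation J := kernel_primitive.

Lemma Phi_half_pos : 0 < Phi (1 / 2).
Proof. apply HPhi. lra. Qed.

Lemma is_RInt_kernel_primitive x y : 0 < x -> 0 < y -> is_RInt (kernel a) x y (J y - J x).
Proof.
  intros Hx Hy. pose proof Phi_half_pos as Hhalf.
  replace (J y - J x) with (RInt (kernel a) x y).
  - apply (@RInt_correct R_CompleteNormedModule), ex_RInt_kernel; assumption.
  - unfold J. pose proof (RInt_Chasles (kernel a) (Phi (1 / 2)) x y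
      (ex_RInt_kernel a _ _ Hhalf Hx) (ex_RInt_kernel a _ _ Hx Hy)) as HC.
    change (RInt (kernel a) (Phi (1 / 2)) x + RInt (kernel a) x y
      = RInt (kernel a) (Phi (1 / 2)) y) in HC.
    lra.
Qed.

Lemma is_RInt_gen_kernel_primitive x : 0 < x ->
  is_RInt_gen (kernel a) (at_right 0) (at_point x) (J x).
Proof.
  intros Hx. destruct (HPhi (1 / 2) ltac:(lra)) as [Hhalf_pos Hhalf].
  replace (J x) with (plus (c * (1 / 2)) (J x - J (Phi (1 / 2)))).
  - apply (is_RInt_gen_Chasles _ _ _ _ Hhalf), is_RInt_gen_at_point, is_RInt_kernel_primitive; assumption.
  - unfold J. rewrite RInt_point. change (zero : R) with 0.
    change (c * (1 / 2) + (c / 2 + RInt (kernel a) (Phi (1 / 2)) x - (c / 2 + 0))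
      = c / 2 + RInt (kernel a) (Phi (1 / 2)) x).
    field.
Qed.

Lemma kernel_primitive_Phi s : 0 < s < 1 -> J (Phi s) = c * s.
Proof.
  intros Hs. destruct (HPhi s Hs) as [Hpos Hint].
  pose proof (is_RInt_gen_kernel_primitive _ Hpos) as HJ.
  rewrite <- (RInt_gen_eq _ _ HJ), <- (RInt_gen_eq _ _ Hint). reflexivity.
Qed.

Lemma is_derive_kernel_primitive x : 0 < x -> is_derive J x (kernel a x).
Proof.
  intros Hx. pose proof Phi_half_pos as Hhalf.
  assert (HI : is_derive (RInt (kernel a) (Phi (1 / 2))) x (kernel a x)).
  { apply (is_derive_RInt (kernel a) _ (Phi (1 / 2))); [|apply kernel_continuous, Hx].
    apply (filter_imp (fun y => 0 < y)); [|apply locally_pos, Hx].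
    intros y Hy. apply (@RInt_correct R_CompleteNormedModule), ex_RInt_kernel; assumption. }
  pose proof (is_derive_plus _ _ x _ _ (is_derive_const (c / 2) x) HI) as HJ.
  rewrite plus_zero_l in HJ. exact HJ.
Qed.

Lemma kernel_primitive_sub_ge x y : 0 < x -> x <= y -> (y - x) * kernel a y <= J y - J x.
Proof.
  intros Hx Hxy.
  apply (is_RInt_le (fun _ => kernel a y) (kernel a) x y); [exact Hxy | | |].
  - apply (is_RInt_const x y (kernel a y)).
  - apply is_RInt_kernel_primitive; lra.
  - intros t Ht. apply kernel_decreasing; lra.
Qed.

Lemma kernel_primitive_lt x y : 0 < x -> x < y -> J x < J y.
Proof.
  intros Hx Hxy. pose proof (kernel_primitive_sub_ge x y Hx (Rlt_le _ _ Hxy)).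
  pose proof (kernel_pos a y). nra.
Qed.

Lemma kernel_primitive_nonneg x : 0 < x -> 0 <= J x.
Proof.
  intros Hx. apply (is_RInt_gen_nonneg (FFa := at_right_proper_filter 0) (FFb := at_point_filter x) (kernel a)).
  - exists (fun t => 0 < t < x) (fun t => t = x); [apply at_right_0_lt, Hx | reflexivity |].
    intros u v Hu Hv. simpl. lra.
  - exists (fun t => 0 < t < x) (fun t => t = x); [apply at_right_0_lt, Hx | reflexivity |].
    intros u v Hu Hv t Ht. left. apply kernel_pos.
  - apply is_RInt_gen_kernel_primitive, Hx.
Qed.

Lemma kernel_primitive_pos x : 0 < x -> 0 < J x.
Proof.
  intros Hx. pose proof (kernel_primitive_lt (x / 2) x ltac:(lra) ltac:(lra)).
  pose proof (kernel_primitive_nonneg (x / 2) ltac:(lra)). lra.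
Qed.

Lemma total_mass_pos : 0 < c.
Proof.
  pose proof (kernel_primitive_pos _ Phi_half_pos) as HJ.
  rewrite kernel_primitive_Phi in HJ by lra. lra.
Qed.

Lemma kernel_primitive_bounded x : 1 <= x -> J x <= J 1 + 1 / a + 6 / (1 + a).
Proof.
  intros Hx.
  set (F := fun u => - / a * exp (- a * u) + 6 * (- / (1 + a) * exp (- (1 + a) * u))).
  assert (HF : is_RInt (fun t => exp (- a * t) + 6 * exp (- (1 + a) * t)) 1 x (F x - F 1)).
  { apply (@is_RInt_derive R_CompleteNormedModule F).
    - intros t _. unfold F. auto_derive; [exact I|]. field. lra.
    - intros t _. apply (ex_derive_continuous (fun t => exp (- a * t) + 6 * exp (- (1 + a) * t))).
      auto_derive. exact I. }
  assert (J x - J 1 <= F x - F 1).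
  { apply (is_RInt_le (kernel a) (fun t => exp (- a * t) + 6 * exp (- (1 + a) * t)) 1 x);
      [exact Hx | apply is_RInt_kernel_primitive; lra | exact HF |].
    intros t Ht. pose proof (kernel_near_infty a t ltac:(lra) ltac:(lra)) as Hk.
    apply Rabs_le_between in Hk. lra. }
  assert (F x <= 0).
  { unfold F. pose proof (exp_pos (- a * x)). pose proof (exp_pos (- (1 + a) * x)).
    assert (0 < / a) by (apply Rinv_0_lt_compat; lra).
    assert (0 < / (1 + a)) by (apply Rinv_0_lt_compat; lra). nra. }
  assert (- F 1 <= 1 / a + 6 / (1 + a)).
  { unfold F. pose proof (exp_le_exp (- a * 1) 0 ltac:(lra)).
    pose proof (exp_le_exp (- (1 + a) * 1) 0 ltac:(lra)).
    rewrite exp_0 in *. pose proof (exp_pos (- a * 1)). pose proof (exp_pos (- (1 + a) * 1)).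
    assert (0 < / a) by (apply Rinv_0_lt_compat; lra).
    assert (0 < / (1 + a)) by (apply Rinv_0_lt_compat; lra). unfold Rdiv. nra. }
  lra.
Qed.

Lemma is_RInt_gen_kernel_tail x : 0 < x ->
  is_RInt_gen (kernel a) (at_point x) (Rbar_locally p_infty) (c - J x).
Proof.
  intros Hx.
  destruct (filterlim_nondecreasing_bounded J 1 (J 1 + 1 / a + 6 / (1 + a))) as [l Hl].
  { intros u v Huv. destruct (Req_dec u v) as [->|Hne]; [lra|].
    left. apply kernel_primitive_lt; lra. }
  { apply kernel_primitive_bounded. }
  assert (Htail : forall y, 0 < y -> is_RInt_gen (kernel a) (at_point y) (Rbar_locally p_infty) (l - J y)).
  { intros y Hy. apply (is_RInt_gen_primitive J).
    - exact Hy.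
    - exists 0. auto.
    - apply is_derive_kernel_primitive.
    - apply kernel_continuous.
    - apply filterlim_at_point.
    - exact Hl. }
  assert (Hc : c = l).
  { unfold c. apply RInt_gen_eq. replace l with (plus (J 1) (l - J 1)) by (change (J 1 + (l - J 1) = l); ring).
    apply (@is_RInt_gen_Chasles R_NormedModule (at_right 0) (Rbar_locally p_infty) _ _ (kernel a) 1).
    - apply is_RInt_gen_kernel_primitive. lra.
    - apply Htail. lra. }
  rewrite Hc. apply Htail, Hx.
Qed.

Lemma kernel_primitive_lt_total_mass x : 0 < x -> J x < c.
Proof.
  intros Hx. pose proof (kernel_primitive_lt x (x + 1) Hx ltac:(lra)).
  enough (0 <= c - J (x + 1)) by lra.
  apply (is_RInt_gen_nonneg (FFa := at_point_filter (x + 1)) (FFb := Rbar_locally_filter p_infty) (kernel a)).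
  - exists (fun t => t = x + 1) (fun t => x + 1 <= t); [reflexivity | exists (x + 1); intros; lra |].
    intros u v Hu Hv. simpl. lra.
  - exists (fun t => t = x + 1) (fun t => x + 1 <= t); [reflexivity | exists (x + 1); intros; lra |].
    intros u v Hu Hv t Ht. left. apply kernel_pos.
  - apply is_RInt_gen_kernel_tail. lra.
Qed.

Lemma Phi_lt s t : 0 < s -> s < t -> t < 1 -> Phi s < Phi t.
Proof.
  intros Hs Hst Ht. destruct (Rlt_le_dec (Phi s) (Phi t)) as [Hlt|Hge]; [exact Hlt|].
  assert (HJ : J (Phi t) <= J (Phi s)).
  { destruct (Req_dec (Phi t) (Phi s)) as [->|Hne]; [lra|].
    left. apply kernel_primitive_lt; [apply HPhi; lra | lra]. }
  rewrite !kernel_primitive_Phi in HJ by lra. pose proof total_mass_pos. nra.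
Qed.

Let Phi_inv (x : R) : R := J x / c.

Lemma derivable_pt_lim_Phi_inv x : 0 < x -> derivable_pt_lim Phi_inv x (kernel a x / c).
Proof.
  intros Hx. apply is_derive_Reals.
  apply (is_derive_ext (fun y => / c * J y)); [intros t; change (/ c * J t = J t / c); unfold Rdiv; ring|].
  replace (kernel a x / c) with (/ c * kernel a x) by (unfold Rdiv; ring).
  apply is_derive_scal, is_derive_kernel_primitive, Hx.
Qed.

Lemma Phi_inv_Phi s : 0 < s < 1 -> Phi_inv (Phi s) = s.
Proof.
  intros Hs. unfold Phi_inv. rewrite kernel_primitive_Phi by exact Hs.
  pose proof total_mass_pos. field. lra.
Qed.

Lemma Phi_continuity_pt s : 0 < s < 1 -> continuity_pt Phi s.
Proof.
  intros Hs. pose proof total_mass_pos as Hc.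
  assert (Hlb : 0 < Phi (s / 2)) by (apply HPhi; lra).
  assert (Hmono : forall u v, s / 2 <= u <= (1 + s) / 2 -> s / 2 <= v <= (1 + s) / 2 ->
      u <= v -> Phi u <= Phi v).
  { intros u v Hu Hv Huv. destruct (Req_dec u v) as [->|Hne]; [lra|]. left. apply Phi_lt; lra. }
  apply (continuity_pt_recip_interv Phi_inv Phi (Phi (s / 2)) (Phi ((1 + s) / 2))).
  - apply Phi_lt; lra.
  - intros u v Hu Huv Hv. unfold Phi_inv. apply Rmult_lt_compat_r; [apply Rinv_0_lt_compat, Hc|].
    apply kernel_primitive_lt; lra.
  - intros u Hu Hu'. rewrite !Phi_inv_Phi in Hu, Hu' by lra. unfold comp, id. apply Phi_inv_Phi. lra.
  - intros u Hu Hu'. rewrite !Phi_inv_Phi in Hu, Hu' by lra. split; apply Hmono; lra.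
  - intros u Hu. apply derivable_continuous_pt.
    exists (kernel a u / c). apply derivable_pt_lim_Phi_inv. lra.
  - rewrite !Phi_inv_Phi by lra. lra.
Qed.

Lemma is_derive_Phi s : 0 < s < 1 -> is_derive Phi s (c / kernel a (Phi s)).
Proof.
  intros Hs. pose proof total_mass_pos as Hc. pose proof (kernel_pos a (Phi s)) as Hk.
  assert (Hlb : 0 < Phi (s / 2)) by (apply HPhi; lra).
  assert (Prf : forall y, Phi (s / 2) <= y <= Phi ((1 + s) / 2) -> derivable_pt Phi_inv y).
  { intros y Hy. exists (kernel a y / c). apply derivable_pt_lim_Phi_inv. lra. }
  assert (Hincr : Phi (s / 2) <= Phi s <= Phi ((1 + s) / 2)).
  { split; left; apply Phi_lt; lra. }
  assert (HD : derive_pt Phi_inv (Phi s) (Prf (Phi s) Hincr) = kernel a (Phi s) / c).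
  { apply derive_pt_eq_0, derivable_pt_lim_Phi_inv. lra. }
  apply is_derive_Reals.
  replace (c / kernel a (Phi s)) with (1 / derive_pt Phi_inv (Phi s) (Prf (Phi s) Hincr))
    by (rewrite HD; field; lra).
  apply derivable_pt_lim_recip_interv.
  - apply Phi_continuity_pt, Hs.
  - lra.
  - lra.
  - intros u Hu. unfold comp, id. apply Phi_inv_Phi. lra.
  - rewrite HD. apply Rgt_not_eq, Rdiv_lt_0_compat; lra.
Qed.

Lemma Derive_Phi s : 0 < s < 1 -> Derive Phi s = c * exp (a * ln (exp (Phi s) - 1)).
Proof.
  intros Hs. rewrite (is_derive_unique _ _ _ (is_derive_Phi s Hs)).
  unfold kernel, Rpower. replace (- a * ln (exp (Phi s) - 1)) with (- (a * ln (exp (Phi s) - 1))) by ring.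
  rewrite exp_Ropp. field. apply Rgt_not_eq, exp_pos.
Qed.

Lemma Derive_n_2_Phi s : 0 < s < 1 ->
  Derive_n Phi 2 s = a * c ^ 2 * exp (Phi s + (2 * a - 1) * ln (exp (Phi s) - 1)).
Proof.
  intros Hs. set (D := fun y => c * exp (a * ln (exp y - 1))).
  assert (Hy : 0 < Phi s) by (apply HPhi, Hs).
  pose proof (exp_ineq1 (Phi s) ltac:(lra)) as Hey.
  change (Derive_n Phi 2 s) with (Derive (Derive Phi) s).
  rewrite (Derive_ext_loc _ (fun t => D (Phi t))).
  2:{ apply (filter_imp _ _ (fun t Ht => Derive_Phi t Ht)), locally_unit_interval, Hs. }
  assert (HD : is_derive D (Phi s) (D (Phi s) * (a * exp (Phi s) / (exp (Phi s) - 1)))).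
  { unfold D. auto_derive; [lra|]. unfold Rminus, Rdiv. field. lra. }
  apply is_derive_unique.
  replace (a * c ^ 2 * exp (Phi s + (2 * a - 1) * ln (exp (Phi s) - 1)))
    with (c / kernel a (Phi s) * (D (Phi s) * (a * exp (Phi s) / (exp (Phi s) - 1)))).
  - exact (is_derive_comp D Phi s _ _ HD (is_derive_Phi s Hs)).
  - unfold D, kernel, Rpower.
    replace (Phi s + (2 * a - 1) * ln (exp (Phi s) - 1))
      with (Phi s + a * ln (exp (Phi s) - 1) + a * ln (exp (Phi s) - 1) + - ln (exp (Phi s) - 1)) by ring.
    replace (- a * ln (exp (Phi s) - 1)) with (- (a * ln (exp (Phi s) - 1))) by ring.
    rewrite !exp_plus, !exp_Ropp, exp_ln by lra.
    field. split; [lra | apply Rgt_not_eq, exp_pos].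
Qed.

Lemma ln_kernel_tail_estimate y : 20 <= y -> Rabs (ln (a * (c - J y)) + a * y) <= 6 * exp (- y).
Proof.
  intros Hy. pose proof (kernel_primitive_lt_total_mass y ltac:(lra)) as Hm.
  pose proof (kernel_integral_near_infty a y (c - J y) Ha ltac:(lra)
    (is_RInt_gen_kernel_tail y ltac:(lra))) as Hb.
  set (m := c - J y) in *. set (t := exp (- y)).
  assert (Htpos : 0 < t) by apply exp_pos.
  assert (Ht : t <= / 21).
  { apply Rle_trans with (/ (1 + y)); [apply exp_neg_le_inv; lra|]. apply Rinv_le_contravar; lra. }
  set (w := a * m * exp (a * y)).
  assert (Hea : 0 < exp (a * y)) by apply exp_pos.
  assert (Hw : Rabs (w - 1) <= 3 * t).
  { replace (w - 1) with (a * exp (a * y) * (m - exp (- a * y) / a))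
      by (unfold w; replace (- a * y) with (- (a * y)) by ring; rewrite exp_Ropp; field; lra).
    replace (exp (- (1 + a) * y)) with (t * / exp (a * y)) in Hb
      by (unfold t; rewrite <- exp_Ropp, <- exp_plus; f_equal; ring).
    rewrite Rabs_mult, Rabs_pos_eq by nra.
    apply Rle_trans with (a * exp (a * y) * (6 * (t * / exp (a * y)) / (1 + a))).
    - apply Rmult_le_compat_l; [nra | exact Hb].
    - replace (a * exp (a * y) * (6 * (t * / exp (a * y)) / (1 + a)))
        with (6 * t * (a / (1 + a))) by (field; lra).
      assert (a / (1 + a) <= / 2) by (apply (Rmult_le_reg_r (2 * (1 + a))); [lra|]; field_simplify; lra).
      nra. }
  assert (Ham : 0 < a * m) by (apply Rmult_lt_0_compat; unfold m; lra).
  replace (ln (a * m) + a * y) with (ln w)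
    by (unfold w; rewrite ln_mult, ln_exp by (exact Ham || apply exp_pos); reflexivity).
  pose proof (Rabs_ln_le w ltac:(apply Rabs_le_between in Hw; lra)). lra.
Qed.

Lemma Phi_near_one : exists delta K, 0 < delta <= 1 / 2 /\ forall eta, 0 < eta < delta ->
  20 <= Phi (1 - eta) /\
  Rabs (ln (a * c * eta) + a * Phi (1 - eta)) <= 6 * exp (- Phi (1 - eta)) /\
  exp (- Phi (1 - eta)) <= K * Rpower eta (/ a).
Proof.
  pose proof total_mass_pos as Hc. pose proof (kernel_primitive_lt_total_mass 20 ltac:(lra)).
  set (delta := Rmin (1 / 2) ((c - J 20) / c)).
  assert (Hdelta : 0 < delta) by (apply Rmin_pos; [lra | apply Rdiv_lt_0_compat; lra]).
  assert (Hd1 : delta <= 1 / 2) by apply Rmin_l.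
  assert (Hd2 : delta <= (c - J 20) / c) by apply Rmin_r.
  exists delta, (exp (/ a * (ln (a * c) + 1))). split; [lra|]. intros eta Heta.
  set (y := Phi (1 - eta)).
  assert (Hy0 : 0 < y) by (apply HPhi; lra).
  assert (Hm : c - J y = c * eta) by (unfold y; rewrite kernel_primitive_Phi by lra; ring).
  assert (Hy : 20 <= y).
  { apply Rnot_lt_le. intros Hlt. pose proof (kernel_primitive_lt y 20 Hy0 Hlt).
    assert ((c - J 20) / c < eta) by (apply (Rmult_lt_reg_r c); [lra|]; field_simplify; lra).
    lra. }
  pose proof (ln_kernel_tail_estimate y Hy) as Hlog.
  rewrite Hm, <- Rmult_assoc in Hlog.
  split; [exact Hy | split; [exact Hlog|]].
  assert (Ht : exp (- y) <= / 21).
  { apply Rle_trans with (/ (1 + y)); [apply exp_neg_le_inv; lra|]. apply Rinv_le_contravar; lra. }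
  rewrite ln_mult in Hlog by (try apply Rmult_lt_0_compat; lra).
  apply Rabs_le_between in Hlog.
  assert (a * (- y) <= ln (a * c) + 1 + ln eta) by lra.
  unfold Rpower. rewrite <- exp_plus. apply exp_le_exp.
  replace (- y) with (/ a * (a * (- y))) by (field; lra).
  rewrite <- Rmult_plus_distr_l. apply Rmult_le_compat_l; [left; apply Rinv_0_lt_compat|]; lra.
Qed.

Lemma ln_kernel_primitive_estimate y : 0 < y <= / 8 ->
  Rabs (ln ((1 - a) * J y) - (1 - a) * ln y) <= 6 * y.
Proof.
  intros Hy. pose proof (kernel_primitive_pos y ltac:(lra)) as HJ.
  pose proof (kernel_integral_near_0 a y (J y) Ha ltac:(lra)
    (is_RInt_gen_kernel_primitive y ltac:(lra))) as Hb.
  set (P := Rpower y (1 - a)).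
  assert (HP : 0 < P) by apply exp_pos.
  replace (Rpower y (2 - a)) with (y * P) in Hb
    by (unfold P; replace (2 - a) with (1 + (1 - a)) by ring;
        rewrite Rpower_plus, Rpower_1 by lra; reflexivity).
  set (w := (1 - a) * J y / P).
  assert (Hw : Rabs (w - 1) <= 3 * y).
  { replace (w - 1) with ((1 - a) / P * (J y - P / (1 - a))) by (unfold w; field; lra).
    rewrite Rabs_mult, Rabs_pos_eq by (apply Rdiv_le_0_compat; lra).
    apply Rle_trans with ((1 - a) / P * (3 * a * (y * P) / (2 - a))).
    - apply Rmult_le_compat_l; [apply Rdiv_le_0_compat; lra | exact Hb].
    - replace ((1 - a) / P * (3 * a * (y * P) / (2 - a)))
        with (3 * y * (a * (1 - a) / (2 - a))) by (field; lra).
      assert (a * (1 - a) / (2 - a) <= 1) by (apply (Rmult_le_reg_r (2 - a)); [lra|]; field_simplify; nra).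
      nra. }
  replace (ln ((1 - a) * J y) - (1 - a) * ln y) with (ln w).
  - pose proof (Rabs_ln_le w ltac:(apply Rabs_le_between in Hw; lra)). lra.
  - unfold w, Rdiv.
    rewrite ln_mult, ln_Rinv by (first [exact HP | apply Rinv_0_lt_compat, HP | apply Rmult_lt_0_compat; lra]).
    unfold P. rewrite ln_Rpower. ring.
Qed.

Lemma Phi_near_zero : exists delta K, 0 < delta <= 1 / 2 /\ forall s, 0 < s < delta ->
  0 < Phi s <= / 8 /\
  Rabs (ln ((1 - a) * c * s) - (1 - a) * ln (Phi s)) <= 6 * Phi s /\
  Phi s <= K * Rpower s (/ (1 - a)).
Proof.
  pose proof total_mass_pos as Hc. pose proof (kernel_primitive_pos (/ 8) ltac:(lra)).
  set (delta := Rmin (1 / 2) (J (/ 8) / c)).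
  assert (Hdelta : 0 < delta) by (apply Rmin_pos; [lra | apply Rdiv_lt_0_compat; lra]).
  assert (Hd1 : delta <= 1 / 2) by apply Rmin_l.
  assert (Hd2 : delta <= J (/ 8) / c) by apply Rmin_r.
  exists delta, (exp (/ (1 - a) * (ln ((1 - a) * c) + 1))). split; [lra|]. intros s Hs.
  set (y := Phi s).
  assert (Hy0 : 0 < y) by (apply HPhi; lra).
  assert (HJy : J y = c * s) by (apply kernel_primitive_Phi; lra).
  assert (Hy : y <= / 8).
  { apply Rnot_lt_le. intros Hlt. pose proof (kernel_primitive_lt (/ 8) y ltac:(lra) Hlt).
    assert (J (/ 8) / c < s) by (apply (Rmult_lt_reg_r c); [lra|]; field_simplify; lra).
    lra. }
  pose proof (ln_kernel_primitive_estimate y (conj Hy0 Hy)) as Hlog.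
  rewrite HJy, <- Rmult_assoc in Hlog.
  split; [lra | split; [exact Hlog|]].
  rewrite ln_mult in Hlog by (try apply Rmult_lt_0_compat; lra).
  apply Rabs_le_between in Hlog.
  assert ((1 - a) * ln y <= ln ((1 - a) * c) + 1 + ln s) by lra.
  rewrite <- (exp_ln y) at 1 by exact Hy0.
  unfold Rpower. rewrite <- exp_plus. apply exp_le_exp.
  replace (ln y) with (/ (1 - a) * ((1 - a) * ln y)) by (field; lra).
  rewrite <- Rmult_plus_distr_l. apply Rmult_le_compat_l; [left; apply Rinv_0_lt_compat|]; lra.
Qed.

Lemma Linf_c2_exp s : 0 < s < 1 ->
  Linf_c2 Phi s = exp ((1 - 2 * a) * ln (exp (Phi s) - 1) - Phi s - ln a - 2 * ln c).
Proof.
  intros Hs. pose proof total_mass_pos. unfold Linf_c2. rewrite Derive_n_2_Phi by exact Hs.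
  replace ((1 - 2 * a) * ln (exp (Phi s) - 1) - Phi s - ln a - 2 * ln c)
    with (- (Phi s + (2 * a - 1) * ln (exp (Phi s) - 1)) + - ln a + - ln c + - ln c) by ring.
  rewrite !exp_plus, !exp_Ropp, !exp_ln by lra.
  rewrite exp_plus. field. repeat split; try lra; apply Rgt_not_eq, exp_pos.
Qed.

Lemma Linf_c1_exp n s : 1 < INR n -> 0 < s < 1 ->
  Linf_c1 n Phi s = exp (ln (INR n - 1) - ln c - a * ln (exp (Phi s) - 1)).
Proof.
  intros Hn Hs. pose proof total_mass_pos. unfold Linf_c1. rewrite Derive_Phi by exact Hs.
  replace (ln (INR n - 1) - ln c - a * ln (exp (Phi s) - 1))
    with (ln (INR n - 1) + - ln c + - (a * ln (exp (Phi s) - 1))) by ring.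
  rewrite !exp_plus, !exp_Ropp, !exp_ln by lra.
  field. split; [apply Rgt_not_eq, exp_pos | lra].
Qed.
End Profile.

(** * The coefficients of L_infty near the ends *)

Section Coefficients.

Variables (n : nat) (Phi : R -> R).
Hypothesis Hn : (2 <= n)%nat.
Hypothesis HPhi : is_Phi_infty n Phi.

Let a := 1 / (INR n + 1).
Let c := c_n n.

Lemma INR_ge_2 : 2 <= INR n.
Proof. apply le_INR in Hn. exact Hn. Qed.

Lemma inv_succ_bounds : 0 < a < 1.
Proof.
  pose proof INR_ge_2. unfold a. split; [apply Rdiv_lt_0_compat; lra|].
  apply (Rmult_lt_reg_r (INR n + 1)); [lra|]. field_simplify; lra.
Qed.

Lemma c_n_pos : 0 < c.
Proof. exact (total_mass_pos a Phi inv_succ_bounds HPhi). Qed.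

Lemma unit_interval_coefs : 0 <= 1 - 2 * a <= 1 /\ 0 <= (INR n - 1) / INR n <= 1 /\ 0 <= / INR n <= 1.
Proof.
  pose proof INR_ge_2.
  assert (Ha : 1 - 2 * a = (INR n - 1) / (INR n + 1)) by (unfold a; field; lra).
  assert (HN1 : (INR n - 1) / INR n = 1 - / INR n) by (field; lra).
  assert (0 < / INR n <= / 2) by (split; [apply Rinv_0_lt_compat | apply Rinv_le_contravar]; lra).
  assert (0 <= (INR n - 1) / (INR n + 1)) by (apply Rdiv_le_0_compat; lra).
  assert ((INR n - 1) / (INR n + 1) <= 1) by (apply (Rmult_le_reg_r (INR n + 1)); [lra|]; field_simplify; lra).
  lra.
Qed.

Lemma Rpower_inv_succ eta : 0 < eta -> Rpower eta (/ a) = eta ^ (n + 1).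
Proof.
  intros Heta. rewrite <- Rpower_pow by exact Heta. f_equal.
  pose proof INR_ge_2. unfold a. rewrite plus_INR. simpl. field. lra.
Qed.

Lemma Linf_c2_near_one :
  rel_err_O (fun eta => Linf_eta_c2 Phi eta) (Lplus_c2 n) (fun eta => eta ^ (n + 1)).
Proof.
  pose proof INR_ge_2. pose proof inv_succ_bounds. pose proof c_n_pos.
  pose proof unit_interval_coefs as (Hc2 & _).
  destruct (Phi_near_one a Phi inv_succ_bounds HPhi) as (delta & K & Hdelta & Hnear).
  apply (rel_err_O_of_ln_bound _ _ _ (fun eta => 14 * exp (- Phi (1 - eta))) (14 * K) delta (proj1 Hdelta)).
  intros eta Heta. destruct (Hnear eta Heta) as (Hy & Hlog & HK).
  unfold Linf_eta_c2, Lplus_c2. rewrite (Linf_c2_exp a Phi inv_succ_bounds HPhi) by lra.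
  change (RInt_gen (kernel a) (at_right 0) (Rbar_locally p_infty)) with c in *.
  set (y := Phi (1 - eta)) in *.
  rewrite Rpower_inv_succ in HK by lra.
  assert (0 < a * c) by (apply Rmult_lt_0_compat; lra).
  assert (0 < eta * eta) by nra.
  rewrite (ln_mult (a * c) eta), (ln_mult a c) in Hlog by lra.
  replace (eta ^ 2 / (INR n + 1)) with (a * (eta * eta)) by (unfold a; simpl; field; lra).
  rewrite ln_exp, (ln_mult a (eta * eta)), (ln_mult eta eta) by lra.
  pose proof (Rabs_ln_expm1_sub y ltac:(lra)) as HL.
  pose proof (exp_neg_le_inv y ltac:(lra)) as Ht.
  assert (/ (1 + y) <= / 21) by (apply Rinv_le_contravar; lra).
  replace ((1 - 2 * a) * ln (exp y - 1) - y - ln a - 2 * ln c - (ln a + (ln eta + ln eta)))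
    with ((1 - 2 * a) * (ln (exp y - 1) - y) - 2 * (ln a + ln c + ln eta + a * y)) by ring.
  apply Rabs_le_between in HL. apply Rabs_le_between in Hlog.
  repeat split.
  - apply exp_pos.
  - apply Rmult_lt_0_compat; nra.
  - apply Rabs_le_between. split; nra.
  - lra.
  - lra.
Qed.

Lemma Linf_c1_near_one :
  rel_err_O (fun eta => Linf_eta_c1 n Phi eta) (Lplus_c1 n) (fun eta => eta ^ (n + 1)).
Proof.
  pose proof INR_ge_2. pose proof inv_succ_bounds. pose proof c_n_pos.
  destruct (Phi_near_one a Phi inv_succ_bounds HPhi) as (delta & K & Hdelta & Hnear).
  apply rel_err_O_opp.
  apply (rel_err_O_of_ln_bound _ _ _ (fun eta => 8 * exp (- Phi (1 - eta))) (8 * K) delta (proj1 Hdelta)).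
  intros eta Heta. destruct (Hnear eta Heta) as (Hy & Hlog & HK).
  unfold Linf_eta_c1, Lplus_c1. rewrite Ropp_involutive, (Linf_c1_exp a Phi inv_succ_bounds HPhi) by lra.
  change (RInt_gen (kernel a) (at_right 0) (Rbar_locally p_infty)) with c in *.
  set (y := Phi (1 - eta)) in *.
  rewrite Rpower_inv_succ in HK by lra.
  assert (0 < a * c) by (apply Rmult_lt_0_compat; lra).
  assert (0 < a * eta) by (apply Rmult_lt_0_compat; lra).
  rewrite (ln_mult (a * c) eta), (ln_mult a c) in Hlog by lra.
  replace (- (- ((INR n - 1) * eta) / (INR n + 1))) with ((INR n - 1) * (a * eta)) by (unfold a; field; lra).
  rewrite ln_exp, (ln_mult (INR n - 1) (a * eta)), (ln_mult a eta) by lra.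
  pose proof (Rabs_ln_expm1_sub y ltac:(lra)) as HL.
  pose proof (exp_neg_le_inv y ltac:(lra)) as Ht.
  assert (/ (1 + y) <= / 21) by (apply Rinv_le_contravar; lra).
  replace (ln (INR n - 1) - ln c - a * ln (exp y - 1) - (ln (INR n - 1) + (ln a + ln eta)))
    with (- (ln a + ln c + ln eta + a * y) - a * (ln (exp y - 1) - y)) by ring.
  apply Rabs_le_between in HL. apply Rabs_le_between in Hlog.
  repeat split.
  - apply exp_pos.
  - apply Rmult_lt_0_compat; lra.
  - apply Rabs_le_between. split; nra.
  - lra.
  - lra.
Qed.

Lemma ln_INR_eq : ln (INR n) = ln (1 - a) - ln a.
Proof.
  pose proof INR_ge_2. pose proof inv_succ_bounds.
  rewrite <- ln_div by lra. f_equal. unfold a. field. lra.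
Qed.

Lemma d_n_pos_ln : 0 < d_n n /\ ln (d_n n) = 1 / INR n * ln (1 - a) + (INR n + 1) / INR n * ln c.
Proof.
  pose proof INR_ge_2. unfold d_n.
  replace (INR n / (INR n + 1)) with (1 - a) by (unfold a; field; lra).
  split.
  - apply Rmult_lt_0_compat; apply exp_pos.
  - rewrite ln_mult, !ln_Rpower by apply exp_pos. reflexivity.
Qed.

Lemma Linf_c2_near_zero :
  rel_err_O (Linf_c2 Phi) (Lminus_c2 n) (fun s => Rpower s ((INR n + 1) / INR n)).
Proof.
  pose proof INR_ge_2. pose proof inv_succ_bounds. pose proof c_n_pos.
  pose proof unit_interval_coefs as (Hc2 & HcN & _). pose proof d_n_pos_ln as [Hd Hlnd].
  destruct (Phi_near_zero a Phi inv_succ_bounds HPhi) as (delta & K & Hdelta & Hnear).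
  apply (rel_err_O_of_ln_bound _ _ _ (fun s => 8 * Phi s) (8 * K) delta (proj1 Hdelta)).
  intros s Hs. destruct (Hnear s Hs) as (Hy & Hlog & HK).
  rewrite (Linf_c2_exp a Phi inv_succ_bounds HPhi) by lra.
  change (RInt_gen (kernel a) (at_right 0) (Rbar_locally p_infty)) with c in *.
  set (y := Phi s) in *.
  replace (/ (1 - a)) with ((INR n + 1) / INR n) in HK by (unfold a; field; lra).
  assert (0 < (1 - a) * c) by (apply Rmult_lt_0_compat; lra).
  rewrite (ln_mult ((1 - a) * c) s), (ln_mult (1 - a) c) in Hlog by lra.
  assert (Hpow : 0 < Rpower s ((INR n - 1) / INR n)) by apply exp_pos.
  assert (0 < INR n * Rpower s ((INR n - 1) / INR n)) by (apply Rmult_lt_0_compat; lra).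
  unfold Lminus_c2.
  rewrite ln_exp, ln_div, ln_mult, ln_Rpower, Hlnd, ln_INR_eq by lra.
  pose proof (ln_expm1_bounds y ltac:(lra)) as HL.
  replace ((1 - 2 * a) * ln (exp y - 1) - y - ln a - 2 * ln c -
     (ln (1 - a) - ln a + (INR n - 1) / INR n * ln s -
      (1 / INR n * ln (1 - a) + (INR n + 1) / INR n * ln c)))
    with ((1 - 2 * a) * (ln (exp y - 1) - ln y) - y
          - (INR n - 1) / INR n * (ln (1 - a) + ln c + ln s - (1 - a) * ln y))
    by (unfold a; field; lra).
  apply Rabs_le_between in Hlog.
  repeat split.
  - apply exp_pos.
  - apply Rdiv_lt_0_compat; lra.
  - apply Rabs_le_between. split; nra.
  - lra.
  - lra.
Qed.

Lemma Linf_c1_near_zero :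
  rel_err_O (Linf_c1 n Phi) (Lminus_c1 n) (fun s => Rpower s ((INR n + 1) / INR n)).
Proof.
  pose proof INR_ge_2. pose proof inv_succ_bounds. pose proof c_n_pos.
  pose proof unit_interval_coefs as (_ & _ & HcN). pose proof d_n_pos_ln as [Hd Hlnd].
  destruct (Phi_near_zero a Phi inv_succ_bounds HPhi) as (delta & K & Hdelta & Hnear).
  apply (rel_err_O_of_ln_bound _ _ _ (fun s => 8 * Phi s) (8 * K) delta (proj1 Hdelta)).
  intros s Hs. destruct (Hnear s Hs) as (Hy & Hlog & HK).
  rewrite (Linf_c1_exp a Phi inv_succ_bounds HPhi) by lra.
  change (RInt_gen (kernel a) (at_right 0) (Rbar_locally p_infty)) with c in *.
  set (y := Phi s) in *.
  replace (/ (1 - a)) with ((INR n + 1) / INR n) in HK by (unfold a; field; lra).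
  assert (0 < (1 - a) * c) by (apply Rmult_lt_0_compat; lra).
  rewrite (ln_mult ((1 - a) * c) s), (ln_mult (1 - a) c) in Hlog by lra.
  assert (Hpow : 0 < Rpower s (- (1 / INR n))) by apply exp_pos.
  assert (0 < (INR n - 1) * Rpower s (- (1 / INR n))) by (apply Rmult_lt_0_compat; lra).
  unfold Lminus_c1.
  rewrite ln_exp, ln_div, ln_mult, ln_Rpower, Hlnd by lra.
  pose proof (ln_expm1_bounds y ltac:(lra)) as HL.
  replace (ln (INR n - 1) - ln c - a * ln (exp y - 1) -
     (ln (INR n - 1) + - (1 / INR n) * ln s -
      (1 / INR n * ln (1 - a) + (INR n + 1) / INR n * ln c)))
    with (- a * (ln (exp y - 1) - ln y)
          + / INR n * (ln (1 - a) + ln c + ln s - (1 - a) * ln y))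
    by (unfold a; field; lra).
  apply Rabs_le_between in Hlog.
  repeat split.
  - apply exp_pos.
  - apply Rdiv_lt_0_compat; lra.
  - apply Rabs_le_between. split; nra.
  - lra.
  - lra.
Qed.
End Coefficients.

Theorem lemma4p2 (n : nat) (Phi : R -> R) :
  (2 <= n)%nat ->
  is_Phi_infty n Phi ->
  (Linf_c0 = Lplus_c0 n /\
   rel_err_O (fun eta => Linf_eta_c2 Phi eta) (Lplus_c2 n) (fun eta => eta ^ (n + 1)) /\
   rel_err_O (fun eta => Linf_eta_c1 n Phi eta) (Lplus_c1 n) (fun eta => eta ^ (n + 1)))
  /\
  (Linf_c0 = Lminus_c0 n /\
   rel_err_O (Linf_c2 Phi) (Lminus_c2 n) (fun s => Rpower s ((INR n + 1) / INR n)) /\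
   rel_err_O (Linf_c1 n Phi) (Lminus_c1 n) (fun s => Rpower s ((INR n + 1) / INR n))).
Proof.
  intros Hn HPhi. pose proof (INR_ge_2 n Hn). pose proof (proj1 (d_n_pos_ln n Hn)).
  split; (split; [|split]).
  - unfold Linf_c0, Lplus_c0. field. lra.
  - exact (Linf_c2_near_one n Phi Hn HPhi).
  - exact (Linf_c1_near_one n Phi Hn HPhi).
  - unfold Linf_c0, Lminus_c0. field. lra.
  - exact (Linf_c2_near_zero n Phi Hn HPhi).
  - exact (Linf_c1_near_zero n Phi Hn HPhi).
Qed.
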